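(* Let $(R,\mathfrak m)$ be a Noetherian local ring of prime characteristic $p$ satisfying $(0:\mathfrak m^p)_R:=\{x\in R\mid \mathfrak m^p x=0\}\not\subseteq \mathfrak m^p$. Let $L_\bullet$ be a complex of finitely generated free $R$-modules whose differentials, written as matrices with respect to bases, have all entries in $\mathfrak m$. Then for every $r\ge 1$ and every integer $j$, $$H_j(L_\bullet\otimes_R {}^{\phi^r}\!R)=0 \iff L_j=0.$$
   Context: $\phi:R\to R$ denotes the Frobenius homomorphism $\phi(a)=a^p$. For $r\ge 1$, ${}^{\phi^r}\!R$ denotes the ring $R$ regarded as an $R$-module via $\phi^r$, i.e. $a\cdot b=a^{p^r}b$ for $a\in R$, $b\in {}^{\phi^r}\!R$. *)

From mathcomp Require Import all_boot all_algebra.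
Set Implicit Arguments. Unset Strict Implicit. Unset Printing Implicit Defensive.
Import GRing.Theory.
Local Open Scope ring_scope.

Definition is_ideal (R : comRingType) (I : R -> Prop) : Prop :=
  [/\ I 0, (forall x y, I x -> I y -> I (x + y)) & (forall a x, I x -> I (a * x))].

Definition fin_gen_ideal (R : comRingType) (I : R -> Prop) : Prop :=
  exists (n : nat) (g : 'I_n -> R),
    forall x, I x <-> exists c : 'I_n -> R, x = \sum_(i < n) c i * g i.

Definition noetherian_ring (R : comRingType) : Prop :=
  forall I : R -> Prop, is_ideal I -> fin_gen_ideal I.

(* Local ring: the non-units form an ideal (R is nontrivial since it is a nzRing);
   this ideal is then the unique maximal ideal m. *)
Definition local_ring (R : comUnitRingType) : Prop :=
  forall x y : R, x \notin GRing.unit -> y \notin GRing.unit -> x + y \notin GRing.unit.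

Definition maxid (R : comUnitRingType) (x : R) : Prop := x \notin GRing.unit.

Definition ideal_pow (R : comRingType) (I : R -> Prop) (k : nat) (x : R) : Prop :=
  exists (n : nat) (a : 'I_n -> 'I_k -> R) (c : 'I_n -> R),
    (forall i j, I (a i j)) /\ x = \sum_(i < n) c i * \prod_(j < k) a i j.

(* the matrix of a differential after base change along phi^r : a |-> a^(p^r) *)
Definition frob_mx (R : comRingType) (p r : nat) (m n : nat) (A : 'M[R]_(m, n)) :
  'M[R]_(m, n) := map_mx (fun a => a ^+ (p ^ r)) A.

(* Complex L_j = R^(n j) (row vectors), with differential d_{j+1} : L_{j+1} -> L_j
   given by v |-> v *m D j.  Homology at index j+1 of L tensor ^{phi^r}R vanishes: *)
Definition frob_homology_vanishes (R : comRingType) (p r : nat) (n : int -> nat)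
  (D : forall j : int, 'M[R]_(n (j + 1), n j)) (j : int) : Prop :=
  forall v : 'rV[R]_(n (j + 1)), v *m frob_mx p r (D j) = 0 ->
    exists w : 'rV[R]_(n (j + 1 + 1)), v = w *m frob_mx p r (D (j + 1)).

From mathcomp Require Import all_boot all_algebra.
Import GRing.Theory.
Local Open Scope ring_scope.

(* For r >= 1 every entry of the Frobenius twist of a differential lies in m^p,
   so an x with m^p x = 0, placed on a basis vector of L_{j+1}, is a
   cycle of L ⊗ ^{phi^r}R; it is not a boundary, since every boundary has its
   coordinates in m^p while x does not. *)

Lemma leq_expn (p r : nat) : (1 <= r)%N -> (p <= p ^ r)%N.
Proof. by case: r => // r _; case: p => // p; rewrite expnS leq_pmulr ?expn_gt0. Qed.

Lemma row0_eq0 (R : nmodType) (m : nat) (v : 'rV[R]_m) : m = 0%N -> v = 0.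
Proof. by move=> m0; move: v; rewrite m0 => v; exact: thinmx0. Qed.

Section IdealPow.

Variables (R : comNzRingType) (I : R -> Prop).

Lemma ideal_pow_sum_mulr_exp (k N m : nat) (c a : 'I_m -> R) :
  (k <= N)%N -> (forall l, I (a l)) ->
  ideal_pow I k (\sum_(l < m) c l * a l ^+ N).
Proof.
move=> kN Ia; exists m, (fun l _ => a l), (fun l => c l * a l ^+ (N - k)).
split=> //; apply: eq_bigr => l _.
by rewrite prodr_const card_ord -mulrA -exprD subnK.
Qed.

Lemma ideal_pow_exp (k N : nat) (a : R) :
  (k <= N)%N -> I a -> ideal_pow I k (a ^+ N).
Proof.
move=> kN Ia.
have := ideal_pow_sum_mulr_exp k N 1 (fun=> 1) (fun=> a) kN (fun=> Ia).
by rewrite big_ord1 mul1r.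
Qed.

Lemma frob_mx_ideal_pow (p r m n : nat) (B : 'M[R]_(m, n)) i k :
  (1 <= r)%N -> (forall i k, I (B i k)) -> ideal_pow I p (frob_mx p r B i k).
Proof.
move=> r1 IB; rewrite /frob_mx mxE.
exact: ideal_pow_exp _ _ _ (leq_expn p r r1) (IB i k).
Qed.

Lemma mulmx_frob_mx_ideal_pow (p r m n o : nat) (w : 'M[R]_(m, n))
    (B : 'M[R]_(n, o)) a b :
  (1 <= r)%N -> (forall i k, I (B i k)) ->
  ideal_pow I p ((w *m frob_mx p r B) a b).
Proof.
move=> r1 IB; rewrite mxE.
under eq_bigr do rewrite mxE.
exact: ideal_pow_sum_mulr_exp _ _ _ _ _ (leq_expn p r r1) (IB ^~ b).
Qed.

End IdealPow.

Lemma scale_delta_mulmx_eq0 (R : comNzRingType) (m n : nat) (x : R) (i : 'I_m)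
    (M : 'M[R]_(m, n)) :
  (forall k, M i k * x = 0) -> (x *: (delta_mx 0 i : 'rV_m)) *m M = 0.
Proof.
move=> Mx; rewrite -scalemxAl -rowE.
by apply/matrixP => a k; rewrite !mxE mulrC Mx.
Qed.

Section FrobeniusHomology.

Variables (R : comNzRingType) (I : R -> Prop) (p r : nat) (n : int -> nat).
Variable D : forall j : int, 'M[R]_(n (j + 1), n j).
Hypotheses (r_gt0 : (1 <= r)%N) (DI : forall j i k, I (D j i k)).

Lemma frob_homology_vanishes_of_rank0 j :
  n (j + 1) = 0%N -> frob_homology_vanishes p r D j.
Proof. by move=> n0 v _; exists 0; rewrite mul0mx; exact: row0_eq0. Qed.

Lemma rank0_of_frob_homology_vanishes (x : R) j :
  (forall y, ideal_pow I p y -> y * x = 0) -> ~ ideal_pow I p x ->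
  frob_homology_vanishes p r D j -> n (j + 1) = 0%N.
Proof.
move=> ann_x x_notin vanish; apply/eqP; rewrite -leqn0 leqNgt.
apply/negP => /(@Ordinal (n (j + 1)) 0) i.
pose v := x *: (delta_mx 0 i : 'rV[R]_(n (j + 1))).
have v_cycle : v *m frob_mx p r (D j) = 0.
  apply: scale_delta_mulmx_eq0 => k; apply: ann_x.
  exact: frob_mx_ideal_pow.
have [w v_bd] := vanish v v_cycle.
apply: x_notin; have -> : x = v 0 i by rewrite !mxE !eqxx mulr1.
by rewrite v_bd; apply: mulmx_frob_mx_ideal_pow.
Qed.

End FrobeniusHomology.

Theorem mainTheorem2 (R : comUnitRingType) (p : nat)
  (hp : prime p) (hchar : p \in [pchar R])
  (hnoeth : noetherian_ring R) (hloc : local_ring R)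
  (hann : exists x : R, (forall y, ideal_pow (@maxid R) p y -> y * x = 0) /\
                        ~ ideal_pow (@maxid R) p x)
  (n : int -> nat) (D : forall j : int, 'M[R]_(n (j + 1), n j))
  (hcx : forall j : int, D (j + 1) *m D j = 0)
  (hmin : forall (j : int) i k, maxid (D j i k)) :
  forall (r : nat), (1 <= r)%N ->
  forall j : int, frob_homology_vanishes p r D j <-> n (j + 1) = 0%N.
Proof.
move=> r r_gt0 j; have [x [ann_x x_notin]] := hann; split.
  exact: rank0_of_frob_homology_vanishes r_gt0 hmin x j ann_x x_notin.
exact: frob_homology_vanishes_of_rank0.
Qed.
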